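(* All points $\mathbf{p}_\sigma^{(\delta)}$, for $\sigma\in\{-1,1\}^d$ with $\sigma_{d-1}=\sigma_d=1$ and $\delta=1/L>0$ sufficiently small, are pairwise distinct, and so are all the points $\mathbf{q}_\sigma$.
   Context: Fix $\epsilon,\gamma$ with $0<4\gamma<\epsilon<\frac12$. The Goldfarb cube $\mathrm{Gol}_d\subseteq\mathbb{R}^d$ is the set of $\mathbf{x}$ with $-z_1\le x_1\le z_1:=1$, $-z_2\le x_2\le z_2:=1-\epsilon-\epsilon x_1$, $-z_k\le x_k\le z_k:=1-\epsilon+\epsilon\gamma-\epsilon(x_{k-1}-\gamma x_{k-2})$ ($3\le k\le d$); its vertices are $\mathbf{v}_\sigma$, $\sigma\in\{-1,1\}^d$ (the vertex where, for each $k$, the upper inequality is tight if $\sigma_k=1$ and the lower one if $\sigma_k=-1$), with $\mathrm{sign}(v_{\sigma,k})=\sigma_k$. The dual Goldfarb cube is $\mathrm{Gol}^{\triangle}_d=\bigcap_{\tau}\{\mathbf{x}:\mathbf{v}_\tau^T\mathbf{x}\le1\}$. Let $\mathcal{S}:=\{\mathbf{x}\in\mathbb{R}^d: x_1=\ldots=x_{d-2}=0\}$. For $\mathbf{x}$ and $L\ge0$, $\mathbf{x}(L):=(Lx_1,\ldots,Lx_{d-2},x_{d-1},x_d)$, $\mathcal{P}(L):=\{\mathbf{x}(L):\mathbf{x}\in\mathcal{P}\}$; with $\delta=1/L$, $\mathrm{Gol}^{\triangle}_d(L)=\bigcap_\tau\{\mathbf{x}:\mathbf{v}_\tau(\delta)^T\mathbf{x}\le1\}$.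 For each $\sigma$ there is $\mathbf{p}_\sigma\in\mathcal{S}\cap\mathrm{Gol}^{\triangle}_d$ with $\mathbf{p}_\sigma^T\mathbf{v}_\sigma=1$, $\mathbf{p}_\sigma^T\mathbf{v}_\tau<1$ ($\tau\ne\sigma$). Let $\mathcal{L}:=\{(0,\ldots,0,2,y)^T:y\in\mathbb{R}\}$. Define $\mathbf{q}_\sigma:=\mathbf{p}_\sigma-C\,\mathbf{v}_\sigma(0)/\|\mathbf{v}_\sigma(0)\|^2$ with $C<0$ chosen so that $q_{\sigma,d-1}=2$, and $\mathbf{p}_\sigma^{(\delta)}:=C\,\mathbf{v}_\sigma(\delta)/\|\mathbf{v}_\sigma(\delta)\|^2+\mathbf{q}_\sigma$ (projection of $\mathbf{q}_\sigma$ onto $\mathbf{v}_\sigma(\delta)^T\mathbf{x}=1$). Known result used: for $\sigma_{d-1}=\sigma_d=1$ and $\delta$ small, (i) $\mathbf{v}_\sigma(\delta)^T\mathbf{p}_\sigma^{(\delta)}=1$ and $\mathbf{v}_\tau(\delta)^T\mathbf{p}_\sigma^{(\delta)}<1$ for $\tau\ne\sigma$; (ii) $(\mathbf{p}_\sigma^{(\delta)},\mathbf{q}_\sigma)$ is the unique pair minimizing $\|\mathbf{x}-\mathbf{x}'\|$ over $\mathbf{x}\in\mathrm{Gol}^{\triangle}_d(L)$, $\mathbf{x}'\in\mathcal{L}$, $x'_d\ge q_{\sigma,d}$. *)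

(* Points of R^d are row vectors 'rV[R]_d; coordinates are
   0-based, so the paper's x_k is x 0 (k-1). Sign vectors sigma in {-1,1}^d
   are {ffun 'I_d -> bool} (true = +1, false = -1). *)
From HB Require Import structures.
From mathcomp Require Import all_boot all_order all_algebra.
From mathcomp Require Import reals.
Set Implicit Arguments. Unset Strict Implicit. Unset Printing Implicit Defensive.
Import Order.TTheory GRing.Theory Num.Theory.
Local Open Scope ring_scope.

Section Goldfarb.
Variables (R : realType) (d : nat) (eps gam : R).

Definition sgnb (b : bool) : R := if b then 1 else -1.

Definition sgn_at (sigma : {ffun 'I_d -> bool}) (k : nat) : R :=
  if insub k is Some i then sgnb (sigma i) else 1.

(* vpair s n = (x_n, x_{n+1}) (0-based) for the vertex where, for each k,
   x_k = s_k * z_k(x), i.e. the upper inequality is tight if s_k = 1 and the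
   lower one if s_k = -1:
     x_0 = s_0 * 1,  x_1 = s_1 (1 - eps - eps x_0),
     x_{k+2} = s_{k+2} (1 - eps + eps gam - eps (x_{k+1} - gam x_k)). *)
Fixpoint vpair (s : nat -> R) (n : nat) : R * R :=
  match n with
  | 0 => (s 0%N, s 1%N * (1 - eps - eps * s 0%N))
  | n'.+1 => let: (a, b) := vpair s n' in
             (b, s n'.+2 * (1 - eps + eps * gam - eps * (b - gam * a)))
  end.

Definition gvertex (sigma : {ffun 'I_d -> bool}) : 'rV[R]_d :=
  \row_(i < d) (vpair (sgn_at sigma) i).1.

Definition dotv (u v : 'rV[R]_d) : R := \sum_(i < d) u 0 i * v 0 i.
Definition norm2 (u : 'rV[R]_d) : R := dotv u u.

Definition scalev (L : R) (x : 'rV[R]_d) : 'rV[R]_d :=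
  \row_(i < d) (if (i < d - 2)%N then L * x 0 i else x 0 i).

Definition in_S (x : 'rV[R]_d) : Prop :=
  forall i : 'I_d, (i < d - 2)%N -> x 0 i = 0.

Definition in_dual_gol (x : 'rV[R]_d) : Prop :=
  forall tau, dotv (gvertex tau) x <= 1.

(* sigma_{d-1} = sigma_d = 1 (paper indexing; 0-based indices d-2, d-1) *)
Definition last_two_pos (sigma : {ffun 'I_d -> bool}) : bool :=
  [forall i : 'I_d, (d - 2 <= i)%N ==> sigma i].

Variable p : {ffun 'I_d -> bool} -> 'rV[R]_d.

Definition coord (x : 'rV[R]_d) (k : nat) : R :=
  if insub k is Some i then x 0 i else 0.

(* C_sigma: the (unique) constant with q_{sigma,d-1} = 2 (paper indexing,
   i.e. 0-based coordinate d-2), where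
   q_sigma = p_sigma - C v_sigma(0) / ||v_sigma(0)||^2. *)
Definition Cq (sigma : {ffun 'I_d -> bool}) : R :=
  let v0 := scalev 0 (gvertex sigma) in
  (coord (p sigma) (d - 2) - 2) * norm2 v0 / coord v0 (d - 2).

Definition qpt (sigma : {ffun 'I_d -> bool}) : 'rV[R]_d :=
  let v0 := scalev 0 (gvertex sigma) in
  p sigma - (Cq sigma / norm2 v0) *: v0.

Definition pdelta (delta : R) (sigma : {ffun 'I_d -> bool}) : 'rV[R]_d :=
  let vd := scalev delta (gvertex sigma) in
  (Cq sigma / norm2 vd) *: vd + qpt sigma.
End Goldfarb.

(* The rescaling x |-> x(L) only stretches the first d - 2 coordinates, to
   which S is orthogonal; hence v(L)^T x does not depend on L for x in S, and
   v_tau(delta)^T p_sigma^(delta) differs from v_tau^T p_sigma by a term of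
   order delta^2.  Since v_sigma(delta)^T p_sigma^(delta) = 1 while
   v_tau^T p_sigma < 1 for tau <> sigma, the points p_sigma^(delta) separate
   once delta is small.
   For q_sigma = p_sigma - a_sigma v_sigma(0) the key fact is a_sigma <= 0,
   i.e. p_{sigma,d-1} <= 2, which follows from p_sigma lying in the dual cube
   by testing it against a vertex with v_{d-1} >= 1/2 and v_d p_{sigma,d} >= 0.
   Then q_sigma = q_tau makes ||p_sigma - p_tau||^2 a sum of two nonpositive
   terms, so p_sigma = p_tau, contradicting v_tau^T p_sigma < 1. *)
From Pilot Require Import Defs.
From HB Require Import structures.
From mathcomp Require Import all_boot all_order all_algebra.
From mathcomp Require Import reals.
From mathcomp Require Import ring lra zify.
Import Order.TTheory GRing.Theory Num.Theory.
Local Open Scope ring_scope.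

Lemma bigmin_pos_lower_bound {R : realDomainType} {T : finType} {h : T -> R} :
  (forall x, 0 < h x) ->
  let e := \big[Num.min/1]_x h x in [/\ 0 < e, e <= 1 & forall x, e <= h x].
Proof.
move=> h_gt0 e; split.
- by rewrite /e; elim/big_ind: _ => // a b a0 b0; rewrite lt_min a0.
- by rewrite /e; elim/big_rec: _ => // i a _ a1; rewrite ge_min a1 orbT.
- by move=> x; rewrite /e (bigD1 x) //= ge_min lexx.
Qed.

HB.lock Definition perpS {R : realType} {d : nat} (v : 'rV[R]_d) := v - scalev 0 v.

Section DotProduct.
Context {R : realType} {d : nat}.
Implicit Types (u v w x y : 'rV[R]_d) (k L : R).

Lemma dotvC u v : dotv u v = dotv v u.
Proof. by apply: eq_bigr => i _; rewrite mulrC. Qed.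

Lemma dotvDl u v w : dotv (u + v) w = dotv u w + dotv v w.
Proof. by rewrite /dotv -big_split; apply: eq_bigr => i _; rewrite mxE mulrDl. Qed.

Lemma dotvZl k u v : dotv (k *: u) v = k * dotv u v.
Proof. by rewrite /dotv mulr_sumr; apply: eq_bigr => i _; rewrite mxE mulrA. Qed.

Lemma dotvBl u v w : dotv (u - v) w = dotv u w - dotv v w.
Proof. by rewrite dotvDl -scaleN1r dotvZl mulN1r. Qed.

Lemma dotvDr u v w : dotv w (u + v) = dotv w u + dotv w v.
Proof. by rewrite !(dotvC w) dotvDl. Qed.

Lemma dotvZr k u v : dotv v (k *: u) = k * dotv v u.
Proof. by rewrite !(dotvC v) dotvZl. Qed.

Lemma dotvBr u v w : dotv w (u - v) = dotv w u - dotv w v.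
Proof. by rewrite !(dotvC w) dotvBl. Qed.

Lemma norm2_ge0 u : 0 <= norm2 u.
Proof. by apply: sumr_ge0 => i _; rewrite -expr2 sqr_ge0. Qed.

Lemma in_S_scalev0 v : in_S (scalev 0 v).
Proof. by move=> i hi; rewrite mxE hi mul0r. Qed.

Lemma in_S_sub x y : in_S x -> in_S y -> in_S (x - y).
Proof. by move=> hx hy i hi; rewrite !mxE hx // hy // subr0. Qed.

Lemma in_S_scale k x : in_S x -> in_S (k *: x).
Proof. by move=> hx i hi; rewrite !mxE hx // mulr0. Qed.

Lemma scalev0_add_perpS v : scalev 0 v + perpS v = v.
Proof. by rewrite perpS.unlock addrC subrK. Qed.

Lemma scalev_perpS L v : scalev L v = scalev 0 v + L *: perpS v.
Proof.
rewrite perpS.unlock; apply/rowP => i; rewrite !mxE.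
by case: ifP => _; rewrite ?mul0r; ring.
Qed.

Lemma dotv_scalev0_perpS u v : dotv (scalev 0 u) (perpS v) = 0.
Proof.
rewrite perpS.unlock /dotv big1 // => i _; rewrite !mxE.
by case: ifP => _; rewrite ?mul0r //; ring.
Qed.

Lemma dotv_S_perpS x v : in_S x -> dotv x (perpS v) = 0.
Proof.
move=> hx; rewrite perpS.unlock /dotv big1 // => i _; rewrite !mxE.
by case: ifP => hi; [rewrite hx // mul0r | ring].
Qed.

Lemma dotv_S_scalev x L v : in_S x -> dotv x (scalev L v) = dotv x v.
Proof.
move=> hx; rewrite scalev_perpS dotvDr dotvZr dotv_S_perpS // mulr0 addr0.
by rewrite -[in RHS](scalev0_add_perpS v) dotvDr dotv_S_perpS // addr0.
Qed.

Lemma norm2_scalev L v :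
  norm2 (scalev L v) = norm2 (scalev 0 v) + L ^+ 2 * norm2 (perpS v).
Proof.
rewrite /norm2 scalev_perpS !(dotvDl, dotvDr, dotvZl, dotvZr).
by rewrite dotv_scalev0_perpS (dotvC (perpS v)) dotv_scalev0_perpS; ring.
Qed.

(* For P = p_sigma, v = v_sigma and C = C_sigma this is p_sigma^(delta) with
   delta = L; the second summand is q_sigma. *)
Definition lift C L P v : 'rV[R]_d :=
  (C / norm2 (scalev L v)) *: scalev L v + (P - (C / norm2 (scalev 0 v)) *: scalev 0 v).

Lemma dotv_lift P v w C L :
  in_S P -> 0 < norm2 (scalev 0 v) ->
  let A := norm2 (scalev 0 v) in let B := norm2 (perpS v) in
  dotv (scalev L w) (lift C L P v) =
  dotv P w + C * L ^+ 2 *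
    (dotv (perpS w) (perpS v) * A - dotv (scalev 0 w) (scalev 0 v) * B) /
    (A * (A + L ^+ 2 * B)).
Proof.
move=> hP hA A B; rewrite /lift -/A; set q := P - _.
have hq : in_S q by apply: in_S_sub => //; apply/in_S_scale/in_S_scalev0.
rewrite dotvDr dotvZr (dotvC _ q) (dotv_S_scalev q L w hq) norm2_scalev -/A -/B.
rewrite -(dotv_S_scalev q 0 w hq) /q dotvBl dotvZl (dotv_S_scalev P 0 w hP).
rewrite (scalev_perpS L w) (scalev_perpS L v) !(dotvDl, dotvDr, dotvZl, dotvZr).
rewrite dotv_scalev0_perpS (dotvC (perpS w)) dotv_scalev0_perpS (dotvC (scalev 0 v)).
have hB : 0 <= B by apply: norm2_ge0.
have hN : A + L ^+ 2 * B != 0.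
  by rewrite lt0r_neq0 // ltr_wpDr // mulr_ge0 // sqr_ge0.
by field; rewrite hN lt0r_neq0.
Qed.

Lemma dotv_lift_self P v C L :
  in_S P -> 0 < norm2 (scalev 0 v) ->
  dotv (scalev L v) (lift C L P v) = dotv P v.
Proof.
move=> hP hA; rewrite dotv_lift // (mulrC (dotv (perpS v) _)) subrr.
by rewrite mulr0 mul0r addr0.
Qed.

Definition lift_slope C v w : R :=
  `|C * (dotv (perpS w) (perpS v) * norm2 (scalev 0 v) -
         dotv (scalev 0 w) (scalev 0 v) * norm2 (perpS v))| /
  norm2 (scalev 0 v) ^+ 2.

Lemma lift_slope_ge0 C v w : 0 <= lift_slope C v w.
Proof. by rewrite divr_ge0 ?exprn_ge0 ?norm2_ge0. Qed.

Lemma dotv_lift_le P v w C L :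
  in_S P -> 0 < norm2 (scalev 0 v) ->
  dotv (scalev L w) (lift C L P v) <= dotv P w + L ^+ 2 * lift_slope C v w.
Proof.
move=> hP hA; rewrite dotv_lift // lerD2l /lift_slope.
set A := norm2 (scalev 0 v); set B := norm2 (perpS v); set Y := _ - _.
have hB : 0 <= B by apply: norm2_ge0.
have hL : 0 <= L ^+ 2 by apply: sqr_ge0.
have hAB : A <= A + L ^+ 2 * B by rewrite lerDl mulr_ge0.
have hAB0 : 0 < A + L ^+ 2 * B by apply: lt_le_trans hAB.
rewrite (_ : C * L ^+ 2 * Y = L ^+ 2 * (C * Y)); last by ring.
rewrite -mulrA ler_wpM2l // (le_trans (y := `|C * Y| / (A * (A + L ^+ 2 * B)))) //.
  by rewrite ler_pM2r ?invr_gt0 ?mulr_gt0 // real_ler_norm // num_real.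
by rewrite expr2 ler_wpM2l // lef_pV2 ?posrE ?mulr_gt0 // ler_pM2l.
Qed.

Lemma shift_nonpos_neq {P Q v w : 'rV[R]_d} {a b : R} :
  a <= 0 -> b <= 0 -> dotv P v = 1 -> dotv Q w = 1 ->
  dotv Q v < 1 -> dotv P w < 1 -> P - a *: v != Q - b *: w.
Proof.
move=> a_le0 b_le0 Pv Qw Qv Pw; apply/eqP => hPQ.
have hD : P - Q = a *: v - b *: w.
  by rewrite -[P](subrK (a *: v)) hPQ addrAC [Q - _ - Q]addrAC subrr add0r addrC.
have := norm2_ge0 (P - Q); rewrite /norm2 {2}hD dotvBr !dotvZr !dotvBl Pv Qw => hn.
have a0 : a = 0 by nra.
have b0 : b = 0 by nra.
by move: hPQ Qv; rewrite a0 b0 !scale0r !subr0 => <-; rewrite Pv ltxx.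
Qed.

End DotProduct.

Definition goldfarb_params {R : realType} (eps gam : R) :=
  [/\ 0 < 4 * gam, 4 * gam < eps & eps < 1 / 2].

Section VertexCoordinates.
Context {R : realType} {eps gam : R} {s : nat -> R}.

Lemma vpair_fst_succ k : (vpair eps gam s k.+1).1 = (vpair eps gam s k).2.
Proof. by rewrite /=; case: vpair. Qed.

Lemma vpair_snd_succ k :
  (vpair eps gam s k.+1).2 = s k.+2 * (1 - eps + eps * gam -
     eps * ((vpair eps gam s k).2 - gam * (vpair eps gam s k).1)).
Proof. by rewrite /=; case: vpair. Qed.

Hypothesis s_sign : forall k, s k = 1 \/ s k = -1.

(* The last conjunct keeps 1 - gam + x_{k+1} - gam x_k nonnegative, so that
   the next slack z_{k+2} stays at most 1. *)
Lemma vpair_bounds k : goldfarb_params eps gam -> let ab := vpair eps gam s k in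
  [/\ -1 <= ab.1 <= 1, -1 <= ab.2 <= 1, 0 < ab.1 * s k, 0 < ab.2 * s k.+1 &
      2 * gam * (1 + ab.2) <= eps * (1 - gam + ab.2 - gam * ab.1)].
Proof.
case=> g0 ge e2; elim: k => [|k IH] /=.
  by case: (s_sign 0) => ->; case: (s_sign 1) => ->;
    split; rewrite ?mul1r ?mulN1r ?mulr1 ?mulrN1 ?opprK;
    try (apply/andP; split); nra.
case: (vpair eps gam s k) IH => a b /= [/andP[a1 a2] /andP[b1 b2] ha hb hj].
have e0 : 0 < eps by lra.
have gb : 0 <= gam * (1 + b) by rewrite mulr_ge0 //; lra.
have ew_ge0 : 0 <= eps * (1 - gam + b - gam * a) by lra.
have ga : - gam <= gam * a by nra.
have ew_le : eps * (1 - gam + b - gam * a) <= eps * 2.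
  by rewrite ler_pM2l //; lra.
by case: (s_sign k.+2) => ->; rewrite ?mul1r ?mulN1r ?mulr1 ?mulrN1 ?mulNr ?opprK;
  split => //; try (apply/andP; split); nra.
Qed.

(* The coordinate right after a lower-tight one has slack at least 1 - eps. *)
Lemma vpair_fst_ge_half k : goldfarb_params eps gam ->
  s k = 1 -> (forall j, j.+1 = k -> s j = -1) -> 1 / 2 <= (vpair eps gam s k).1.
Proof.
move=> hp sk sprev; have [g0 ge e2] := hp.
case: k sk sprev => [|[|m]] sk sprev.
- by rewrite /= sk; lra.
- by rewrite /= sk (sprev 0%N) //; lra.
rewrite vpair_fst_succ vpair_snd_succ sk mul1r.
have [/andP[a1 a2] /andP[b1 b2] _ hb _] := vpair_bounds m hp.
move: hb; rewrite (sprev m.+1) // mulrN1 oppr_gt0 => hb.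
have eb : eps * (vpair eps gam s m).2 <= 0 by rewrite pmulr_rle0 //; lra.
have ega : 0 <= eps * gam * (1 + (vpair eps gam s m).1).
  by rewrite !mulr_ge0 //; lra.
lra.
Qed.

End VertexCoordinates.

Section GoldfarbCube.
Context {R : realType} {n : nat} {eps gam : R}.
Hypothesis params : goldfarb_params eps gam.
Local Notation sign := {ffun 'I_n.+2 -> bool}.

Lemma sgn_at_sign (sigma : sign) k : sgn_at R sigma k = 1 \/ sgn_at R sigma k = -1.
Proof. by rewrite /sgn_at; case: insub => [i|]; [case: (sigma i); [left|right]|left]. Qed.

Lemma sgn_atE (sigma : sign) k : (k < n.+2)%N -> sgn_at R sigma k = sgnb R (sigma (inord k)).
Proof.
move=> hk; rewrite /sgn_at insubT /=; congr (sgnb _ (sigma _)); apply: val_inj.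
by rewrite /= inordK.
Qed.

Lemma gvertexE (sigma : sign) (i : 'I_n.+2) :
  gvertex eps gam sigma 0 i = (vpair eps gam (sgn_at R sigma) i).1.
Proof. by rewrite mxE. Qed.

Lemma dotv_S (x y : 'rV[R]_n.+2) : in_S x ->
  dotv y x = y 0 (inord n) * x 0 (inord n) + y 0 ord_max * x 0 ord_max.
Proof.
move=> hx; rewrite /dotv big_ord_recr /= big_ord_recr /= big1 ?add0r.
  by congr (_ * _ + _); congr (_ _ _); apply: val_inj; rewrite /= inordK.
by move=> i _; rewrite hx ?mulr0 //= subn2.
Qed.

Lemma last_two_pos_pen (sigma : sign) : last_two_pos sigma -> sigma (inord n).
Proof. by move=> /forallP /(_ (inord n)); rewrite inordK // subn2 leqnn. Qed.

(* Test P against the vertex that is lower-tight in every coordinate before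
   d - 1, upper-tight in coordinate d - 1, and has v_d of the sign of P_d. *)
Lemma dual_gol_pen_le2 {P : 'rV[R]_n.+2} :
  in_S P -> in_dual_gol eps gam P -> P 0 (inord n) <= 2.
Proof.
move=> hS hdual.
pose tau : sign := [ffun i => if i == ord_max then 0 <= P 0 ord_max else i == n :> nat].
set s := sgn_at R tau; have s_sign : forall k, s k = 1 \/ s k = -1 := sgn_at_sign tau.
have s_n : s n = 1.
  rewrite /s sgn_atE // ffunE inordK // eqxx.
  by case: ifP => // /eqP/(congr1 val); rewrite /= inordK // => /eqP; rewrite ltn_eqF.
have s_lt_n j : j.+1 = n -> s j = -1.
  move=> hj; rewrite /s sgn_atE ?ffunE; last by lia.
  by case: ifP => [/eqP/(congr1 val)|_]; rewrite /= inordK //; try lia; case: eqP => //; lia.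
have x_n : 1 / 2 <= (vpair eps gam s n).1 := vpair_fst_ge_half s_sign n params s_n s_lt_n.
have last_ge0 : 0 <= (vpair eps gam s n.+1).1 * P 0 ord_max.
  have [_ _ x_last _ _] := vpair_bounds s_sign n.+1 params.
  move: x_last; rewrite /s sgn_atE // ffunE.
  rewrite (_ : inord n.+1 = ord_max); last by apply: val_inj; rewrite /= inordK.
  rewrite eqxx /sgnb; case: ifP => hP; rewrite ?mulr1 ?mulrN1 ?oppr_gt0 => x_last.
    by rewrite mulr_ge0 // ltW.
  by rewrite mulr_le0 // ltW // ltNge hP.
have := hdual tau; rewrite (dotv_S _ _ hS) !gvertexE inordK // -/s => hle.
nra.
Qed.

Lemma gvertex_pen_gt0 {sigma : sign} :
  last_two_pos sigma -> 0 < gvertex eps gam sigma 0 (inord n).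
Proof.
move=> /last_two_pos_pen s_n.
have [_ _ h _ _] := vpair_bounds (sgn_at_sign sigma) n params.
by rewrite gvertexE inordK //; move: h; rewrite sgn_atE // s_n /sgnb mulr1.
Qed.

Lemma scalev0_pen (v : 'rV[R]_n.+2) : scalev 0 v 0 (inord n) = v 0 (inord n).
Proof. by rewrite mxE inordK // subn2 ltnn. Qed.

Lemma norm2_gvertex0_gt0 {sigma : sign} :
  last_two_pos sigma -> 0 < norm2 (scalev 0 (gvertex eps gam sigma)).
Proof.
move=> /gvertex_pen_gt0 ha; rewrite /norm2 (dotv_S _ _ (in_S_scalev0 _)) scalev0_pen.
by rewrite -!expr2 ltr_wpDr ?sqr_ge0 ?exprn_gt0.
Qed.

Lemma coord_pen (x : 'rV[R]_n.+2) : Defs.coord x (n.+2 - 2) = x 0 (inord n).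
Proof.
rewrite subn2 /= /Defs.coord insubT //= => h; congr (x 0 _); apply: val_inj.
by rewrite /= inordK.
Qed.

Context {p : sign -> 'rV[R]_n.+2}.

Lemma Cq_div_le0 {sigma : sign} : last_two_pos sigma ->
  in_S (p sigma) -> in_dual_gol eps gam (p sigma) ->
  Cq eps gam p sigma / norm2 (scalev 0 (gvertex eps gam sigma)) <= 0.
Proof.
move=> hs hS hD; have ha := gvertex_pen_gt0 hs; have hA := norm2_gvertex0_gt0 hs.
have hp := dual_gol_pen_le2 hS hD.
rewrite /Cq !coord_pen scalev0_pen mulrAC mulfK ?lt0r_neq0 //.
by apply: mulr_le0_ge0; rewrite ?subr_le0 // invr_ge0 ltW.
Qed.

Hypothesis p_spec : forall sigma : sign, last_two_pos sigma ->
  [/\ in_S (p sigma), in_dual_gol eps gam (p sigma),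
      dotv (p sigma) (gvertex eps gam sigma) = 1 &
      forall tau, tau != sigma -> dotv (p sigma) (gvertex eps gam tau) < 1].

Lemma qpt_inj (sigma tau : sign) : last_two_pos sigma -> last_two_pos tau ->
  qpt eps gam p sigma = qpt eps gam p tau -> sigma = tau.
Proof.
move=> hs ht hq; apply/eqP; apply: contraT => hne.
have [hSs hDs h1s lts] := p_spec _ hs; have [hSt hDt h1t ltt] := p_spec _ ht.
suff : qpt eps gam p sigma != qpt eps gam p tau by rewrite hq eqxx.
apply: shift_nonpos_neq (Cq_div_le0 hs hSs hDs) (Cq_div_le0 ht hSt hDt) _ _ _ _;
  rewrite !dotv_S_scalev //.
- exact: ltt.
- by apply: lts; rewrite eq_sym.
Qed.

Definition pdelta_threshold (sigma tau : sign) : R :=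
  (1 - dotv (p sigma) (gvertex eps gam tau)) /
  (lift_slope (Cq eps gam p sigma) (gvertex eps gam sigma) (gvertex eps gam tau) + 1).

Lemma pdeltaE (delta : R) (sigma : sign) : pdelta eps gam p delta sigma =
  lift (Cq eps gam p sigma) delta (p sigma) (gvertex eps gam sigma).
Proof. by []. Qed.

Lemma dotv_pdelta_self (delta : R) (sigma : sign) : last_two_pos sigma ->
  dotv (scalev delta (gvertex eps gam sigma)) (pdelta eps gam p delta sigma) = 1.
Proof.
move=> hs; have [hS _ h1 _] := p_spec _ hs.
by rewrite pdeltaE dotv_lift_self // norm2_gvertex0_gt0.
Qed.

Lemma pdelta_threshold_gt0 {sigma tau : sign} : last_two_pos sigma -> tau != sigma ->
  0 < pdelta_threshold sigma tau.
Proof.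
move=> hs hne; have [_ _ _ lts] := p_spec _ hs.
by rewrite divr_gt0 ?subr_gt0 ?lts // ltr_wpDl ?lift_slope_ge0.
Qed.

Lemma dotv_pdelta_lt1 (delta : R) {sigma tau : sign} : last_two_pos sigma -> tau != sigma ->
  0 < delta <= 1 -> delta <= pdelta_threshold sigma tau ->
  dotv (scalev delta (gvertex eps gam tau)) (pdelta eps gam p delta sigma) < 1.
Proof.
move=> hs hne /andP[d0 d1] dh; have [hS _ _ lts] := p_spec _ hs.
have T0 := pdelta_threshold_gt0 hs hne.
move: dh T0; rewrite /pdelta_threshold.
set g := dotv _ _; set K := lift_slope _ _ _ => dh T0.
have K0 : 0 <= K by apply: lift_slope_ge0.
set T := (1 - g) / (K + 1) in dh T0.
have hT : T * (K + 1) = 1 - g by rewrite /T mulfVK // lt0r_neq0 // ltr_wpDl.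
rewrite pdeltaE (le_lt_trans (dotv_lift_le _ _ _ _ _ hS (norm2_gvertex0_gt0 hs))) // -/g -/K.
have dK : delta ^+ 2 * K <= delta * K.
  by rewrite ler_wpM2r // expr2 ger_pMr.
have TK : delta * K <= T * K by rewrite ler_wpM2r.
lra.
Qed.

Lemma pdelta_inj_small : exists2 delta0 : R, 0 < delta0 &
  forall delta : R, 0 < delta -> delta < delta0 -> forall sigma tau : sign,
    last_two_pos sigma -> last_two_pos tau ->
    pdelta eps gam p delta sigma = pdelta eps gam p delta tau -> sigma = tau.
Proof.
pose h (st : sign * sign) :=
  if last_two_pos st.1 && (st.2 != st.1) then pdelta_threshold st.1 st.2 else 1.
have h_gt0 st : 0 < h st.
  by rewrite /h; case: ifP => // /andP[]; apply: pdelta_threshold_gt0.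
have [e_gt0 e_le1 e_le] := bigmin_pos_lower_bound h_gt0.
exists (\big[Num.min/1]_st h st) => // delta d0 de sigma tau hs ht heq.
apply/eqP; apply: contraT => hne; rewrite eq_sym in hne.
have hd : delta <= pdelta_threshold sigma tau.
  by have := e_le (sigma, tau); rewrite /h /= hs hne; apply: le_trans; apply: ltW.
have d1 : 0 < delta <= 1 by rewrite d0 (ltW (lt_le_trans de e_le1)).
by have := dotv_pdelta_lt1 delta hs hne d1 hd; rewrite heq dotv_pdelta_self // ltxx.
Qed.

End GoldfarbCube.

Theorem corollary3 (R : realType) (d : nat) (eps gam : R)
    (p : {ffun 'I_d -> bool} -> 'rV[R]_d) :
  (2 <= d)%N ->
  0 < 4 * gam -> 4 * gam < eps -> eps < 1 / 2 ->
  (forall sigma : {ffun 'I_d -> bool}, last_two_pos sigma ->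
     [/\ in_S (p sigma), in_dual_gol eps gam (p sigma),
         dotv (p sigma) (gvertex eps gam sigma) = 1 &
         forall tau, tau != sigma ->
           dotv (p sigma) (gvertex eps gam tau) < 1]) ->
  (exists2 delta0 : R, 0 < delta0 &
     forall delta : R, 0 < delta -> delta < delta0 ->
       forall sigma tau : {ffun 'I_d -> bool},
         last_two_pos sigma -> last_two_pos tau ->
         pdelta eps gam p delta sigma = pdelta eps gam p delta tau ->
         sigma = tau) /\
  (forall sigma tau : {ffun 'I_d -> bool},
     last_two_pos sigma -> last_two_pos tau ->
     qpt eps gam p sigma = qpt eps gam p tau -> sigma = tau).
Proof.
case: d p => [|[|n]] p // _ g0 ge e2 p_spec.
have params : goldfarb_params eps gam by [].
by split; [exact: (pdelta_inj_small params p_spec) | exact: (qpt_inj params p_spec)].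
Qed.
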